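(* Let $G$ be a complete tiered graph on vertex set $[n]$. Then for every $k\ge0$, $\dim_{\mathbb K}\mathcal C_G^{k}=\dim_{\mathbb K}\mathcal S_G^{k}$, where $\mathcal C_G^k$ and $\mathcal S_G^k$ denote the degree-$k$ homogeneous components of $\mathcal C_G$ and $\mathcal S_G$.
   Context: A complete tiered graph on $[n]$ with surjective tiering $\mathbf t:[n]\to[m]$ has edge set exactly $\{\{i,j\}: i<j,\ \mathbf t(i)<\mathbf t(j)\}$. $\mathbb K$ is a field of characteristic $0$. A subset $H\subseteq E(G)$ is slim if $(V(G),E(G)\setminus H)$ is connected. $\Phi_G$ is the commutative $\mathbb K$-algebra generated by variables $\phi_e$, $e\in E(G)$, subject to $\phi_e^2=0$ for all $e$ and $\prod_{e\in H}\phi_e=0$ for every non-slim $H\subseteq E(G)$. $\mathcal C_G$ is the subalgebra of $\Phi_G$ generated by $X_i=\sum_{e\in E(G)}c_{i,e}\phi_e$ ($i\in[n]$), where $c_{i,e}=1$ if $e=\{i,j\}$ with $i<j$, $c_{i,e}=-1$ if $e=\{i,j\}$ with $i>j$, and $c_{i,e}=0$ otherwise; it is graded by degree in the $X_i$. For $e=\{i,j\}$ with $i<j$ let $z_e=z_i-z_j$ and $Z_H=\prod_{e\in H}z_e$; $\mathcal S_G\subseteq\mathbb K[z_1,\dots,z_n]$ is the span of all $Z_H$ with $H$ slim, graded by polynomial degree. *)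

From HB Require Import structures.
From mathcomp Require Import all_boot all_order all_algebra.
From mathcomp Require Import mpoly.
Set Implicit Arguments. Unset Strict Implicit. Unset Printing Implicit Defensive.
Import GRing.Theory.
Local Open Scope ring_scope.

(* Vertices are 'I_n (= [n]); a tiering is t : 'I_n -> 'I_m. *)

(* Edge set of the complete tiered graph: pairs (i,j), i<j, t i < t j. *)
Definition tedge (n m : nat) (t : 'I_n -> 'I_m) : pred ('I_n * 'I_n) :=
  [pred e : 'I_n * 'I_n | (e.1 < e.2)%N && (t e.1 < t e.2)%N].

(* Edges are indexed by 'I_(nE t); [edge v] is the edge with index v. *)
Definition nE (n m : nat) (t : 'I_n -> 'I_m) : nat := #|tedge t|.
Definition edge (n m : nat) (t : 'I_n -> 'I_m) (v : 'I_(nE t)) : 'I_n * 'I_n :=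
  enum_val v.

(* H slim: the graph (V, E \ H) is connected. *)
Definition slim (n m : nat) (t : 'I_n -> 'I_m) (H : {set 'I_(nE t)}) : bool :=
  [forall x : 'I_n, forall y : 'I_n,
     connect (fun a b : 'I_n => [exists v, (v \notin H) &&
                 ((edge v == (a, b)) || (edge v == (b, a)))]) x y].

(* Ambient polynomial ring K[phi_e : e in E(G)]. *)
Definition phiMono (K : fieldType) (n m : nat) (t : 'I_n -> 'I_m)
  (H : {set 'I_(nE t)}) : {mpoly K[nE t]} := \prod_(v in H) 'X_v.

(* Generators of the defining ideal of Phi_G. *)
Definition phiGens (K : fieldType) (n m : nat) (t : 'I_n -> 'I_m)
  : seq {mpoly K[nE t]} :=
  [seq ('X_v) ^+ 2 | v <- enum 'I_(nE t)] ++
  [seq phiMono K H | H <- enum [set H : {set 'I_(nE t)} | ~~ slim H]].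

(* Membership in the ideal I with Phi_G = K[phi]/I. *)
Definition inPhiIdeal (K : fieldType) (n m : nat) (t : 'I_n -> 'I_m)
  (p : {mpoly K[nE t]}) : Prop :=
  exists q : 'I_(size (phiGens K t)) -> {mpoly K[nE t]},
    p = \sum_i q i * (phiGens K t)`_i.

Definition cfun (K : fieldType) (n m : nat) (t : 'I_n -> 'I_m)
  (i : 'I_n) (v : 'I_(nE t)) : K :=
  if (edge v).1 == i then 1 else if (edge v).2 == i then -1 else 0.
Definition Xgen (K : fieldType) (n m : nat) (t : 'I_n -> 'I_m) (i : 'I_n)
  : {mpoly K[nE t]} := \sum_v cfun K i v *: 'X_v.

(* Representatives (in K[phi]) of the elements of C_G^k: linear combinations
   of products of k generators X_i. *)
Definition CGk (K : fieldType) (n m : nat) (t : 'I_n -> 'I_m) (k : nat)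
  (p : {mpoly K[nE t]}) : Prop :=
  exists c : {ffun 'I_k -> 'I_n} -> K,
    p = \sum_f c f *: \prod_(j < k) Xgen K t (f j).

Definition zE (K : fieldType) (n m : nat) (t : 'I_n -> 'I_m) (v : 'I_(nE t))
  : {mpoly K[n]} := 'X_((edge v).1) - 'X_((edge v).2).
Definition ZH (K : fieldType) (n m : nat) (t : 'I_n -> 'I_m)
  (H : {set 'I_(nE t)}) : {mpoly K[n]} := \prod_(v in H) zE K v.

Definition SG (K : fieldType) (n m : nat) (t : 'I_n -> 'I_m)
  (p : {mpoly K[n]}) : Prop :=
  exists c : {set 'I_(nE t)} -> K,
    p = \sum_(H : {set 'I_(nE t)} | slim H) c H *: ZH K H.
Definition SGk (K : fieldType) (n m : nat) (t : 'I_n -> 'I_m) (k : nat)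
  (p : {mpoly K[n]}) : Prop :=
  @SG K n m t p /\ p \is k.-homog.

Definition indep_mod (K : fieldType) (V : lmodType K) (I : V -> Prop)
  (d : nat) (w : 'I_d -> V) : Prop :=
  forall c : 'I_d -> K, I (\sum_i c i *: w i) -> forall i, c i = 0.

(* The image of the subspace W in the quotient V / I has dimension d:
   d is the maximal size of a family in W independent modulo I. *)
Definition has_dim_mod (K : fieldType) (V : lmodType K) (W I : V -> Prop)
  (d : nat) : Prop :=
  (exists w : 'I_d -> V, (forall i, W (w i)) /\ indep_mod I w) /\
  (forall w : 'I_d.+1 -> V, (forall i, W (w i)) -> ~ indep_mod I w).

From HB Require Import structures.
From mathcomp Require Import all_boot all_order all_algebra.
From mathcomp Require Import mpoly.
Set Implicit Arguments. Unset Strict Implicit. Unset Printing Implicit Defensive.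
Import GRing.Theory.
Local Open Scope ring_scope.

(* Both dimensions are ranks of coefficient matrices, and the two matrices
   are transposes of each other up to an invertible rescaling of the columns.
   Modulo the ideal, a polynomial in the phi_e is determined by its
   coefficients at the squarefree monomials phi_H with H slim, so dim C_G^k is
   the rank of the matrix of coefficients of phi_H in X_(f 1) ... X_(f k), for
   f : [k] -> [n].  An element of S_G^k is determined by its coefficients at
   the monomials z^a(f), where a(f)_i = #(f^-1 i), so dim S_G^k is the rank of
   the matrix of coefficients of z^a(f) in Z_H, for slim H with |H| = k.
   Multiplication by X_i acts on phi-monomials as d/dz_i acts on the Z_H: both
   remove one edge e with weight c_(i,e).  Hence the coefficient of phi_H in
   X_(f 1) ... X_(f k) is the constant term of d^a(f) Z_H, namely a(f)! times
   the coefficient of z^a(f) in Z_H, and in characteristic 0 the factorials are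
   invertible. *)

Section DimensionModulo.

Variables (K : fieldType) (V : lmodType K) (W I : V -> Prop).
Variables (J L : finType) (w : J -> V) (phi : V -> L -> K).

Hypothesis W_span : forall a : J -> K, W (\sum_j a j *: w j).
Hypothesis W_spanned :
  forall x, W x -> exists a : J -> K, x = \sum_j a j *: w j.
Hypothesis I_coef : forall a : J -> K,
  I (\sum_j a j *: w j) <-> (forall l, phi (\sum_j a j *: w j) l = 0).
Hypothesis phi_linear : forall (a : J -> K) l,
  phi (\sum_j a j *: w j) l = \sum_j a j * phi (w j) l.

Definition coef_mx : 'M[K]_(#|J|, #|L|) :=
  \matrix_(j, l) phi (w (enum_val j)) (enum_val l).

Let comb (u : 'rV[K]_#|J|) : V := \sum_j u 0 (enum_rank j) *: w j.

Let phi_comb u l : phi (comb u) (enum_val l) = (u *m coef_mx) 0 l.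
Proof.
rewrite phi_linear mxE [RHS](reindex enum_rank) /=; last first.
  by exists enum_val => x _; [apply: enum_rankK | apply: enum_valK].
by apply: eq_bigr => j _; rewrite mxE enum_rankK.
Qed.

Let I_combE u : I (comb u) <-> u *m coef_mx = 0.
Proof.
rewrite I_coef; split=> [u0 | /rowP u0 l].
  by apply/rowP => l; rewrite -phi_comb u0 mxE.
by rewrite -(enum_rankK l) phi_comb u0 mxE.
Qed.

Let sum_comb d (D : 'M[K]_(d, #|J|)) (c : 'I_d -> K) :
  \sum_i c i *: comb (row i D) = comb (\row_i c i *m D).
Proof.
under eq_bigr do rewrite scaler_sumr.
rewrite exchange_big /=; apply: eq_bigr => j _.
rewrite !mxE scaler_suml; apply: eq_bigr => i _.
by rewrite !mxE scalerA.
Qed.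

Let dim_mod_lower :
  exists w' : 'I_(\rank coef_mx) -> V, (forall i, W (w' i)) /\ indep_mod I w'.
Proof.
have /submxP [D baseD] : (row_base coef_mx <= coef_mx)%MS.
  by rewrite eq_row_base.
exists (fun i => comb (row i D)); split=> [i | c]; first exact: W_span.
rewrite sum_comb I_combE -mulmxA -baseD => /eqP.
rewrite mulmx_free_eq0 ?row_base_free // => /eqP /rowP c0 i.
by have := c0 i; rewrite !mxE.
Qed.

Let dim_mod_upper (w' : 'I_(\rank coef_mx).+1 -> V) :
  (forall i, W (w' i)) -> ~ indep_mod I w'.
Proof.
move=> Ww' indep.
have [a w'E] := fin_all_exists (fun i => W_spanned (Ww' i)).
pose Am : 'M[K]_(_, #|J|) := \matrix_(i, j) a i (enum_val j).
have combAm i : w' i = comb (row i Am).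
  by rewrite w'E; apply: eq_bigr => j _; rewrite !mxE enum_rankK.
have : ~~ row_free (Am *m coef_mx).
  by rewrite /row_free neq_ltn ltnS mxrankM_maxr.
rewrite -kermx_eq0 => /rowV0Pn [v /sub_kermxP vAm0 /eqP []].
apply/rowP => i; rewrite mxE; apply: indep.
under eq_bigr do rewrite combAm.
rewrite sum_comb I_combE -mulmxA.
by have -> : \row_i v 0 i = v by apply/rowP => j; rewrite mxE.
Qed.

Lemma has_dim_mod_rank : has_dim_mod W I (\rank coef_mx).
Proof. by split; [exact: dim_mod_lower | exact: dim_mod_upper]. Qed.

End DimensionModulo.

Section Monomials.

Variable N : nat.

Definition mnm_set (H : {set 'I_N}) : 'X_{1..N} := (\sum_(v in H) U_(v))%MM.

Lemma mnm_setE H x : mnm_set H x = (x \in H).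
Proof.
rewrite /mnm_set mnm_sumE; case: (boolP (x \in H)) => Hx.
  rewrite (bigD1 x Hx) /= mnm1E eqxx big1 // => v /andP [_ vx].
  by rewrite mnm1E (negbTE vx).
rewrite big1 // => v Hv; rewrite mnm1E; case: eqP => // vx.
by move: Hx; rewrite -vx Hv.
Qed.

Lemma mnm1_le_set (v : 'I_N) (H : {set 'I_N}) :
  (U_(v) <= mnm_set H)%MM = (v \in H).
Proof.
apply/mnm_lepP/idP => [/(_ v) | vH x].
  by rewrite mnm1E eqxx mnm_setE; case: (v \in H).
by rewrite mnm1E mnm_setE; case: eqP => [<-|]; rewrite ?vH.
Qed.

Lemma mnm_setD1 (v : 'I_N) (H : {set 'I_N}) :
  v \in H -> (mnm_set H - U_(v))%MM = mnm_set (H :\ v).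
Proof.
move=> vH; apply/mnmP => x; rewrite mnmBE !mnm_setE mnm1E in_setD1 eq_sym.
by case: eqP => [->|]; rewrite ?vH ?subn0.
Qed.

Definition mnm_ffun k (f : {ffun 'I_k -> 'I_N}) : 'X_{1..N} :=
  (\sum_(j < k) U_(f j))%MM.

Lemma mdeg_mnm_ffun k (f : {ffun 'I_k -> 'I_N}) : mdeg (mnm_ffun f) = k.
Proof.
rewrite /mnm_ffun mdeg_sum (eq_bigr (fun _ => 1%N)) ?sum1_card ?card_ord //.
by move=> j _; rewrite mdeg1.
Qed.

Lemma mnm_ffun_surj k (a : 'X_{1..N}) :
  mdeg a = k -> exists f : {ffun 'I_k -> 'I_N}, mnm_ffun f = a.
Proof.
elim: k a => [|k IHk] a dega.
  exists [ffun j : 'I_0 => widen_ord (leq0n N) j].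
  by move/eqP: dega; rewrite mdeg_eq0 => /eqP ->; rewrite /mnm_ffun big_ord0.
have [i ai_gt0] : exists i, (0 < a i)%N.
  have [/existsP //|/existsPn a0] := boolP [exists x, 0 < a x]%N.
  suff a0E : a = 0%MM by move: dega; rewrite a0E mdeg0.
  by apply/mnmP => x; have := a0 x; rewrite mnmE lt0n negbK => /eqP.
have Ua : (U_(i) <= a)%MM.
  by apply/mnm_lepP => x; rewrite mnm1E; case: eqP => [<-|].
have [g gE] : exists g : {ffun 'I_k -> 'I_N}, mnm_ffun g = (a - U_(i))%MM.
  by apply: IHk; move: dega; rewrite -{1}(submK Ua) mdegD mdeg1 addn1 => -[].
exists [ffun j => if unlift ord_max j is Some j' then g j' else i].
rewrite /mnm_ffun big_ord_recr /= ffunE unlift_none.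
rewrite (eq_bigr (fun j => U_(g j))%MM) ?[X in (X + _)%MM]gE ?submK // => j _.
have -> : widen_ord (leqnSn k) j = lift ord_max j.
  by apply/val_inj; rewrite /= /bump leqNgt ltn_ord.
by rewrite ffunE liftK.
Qed.

Variable K : fieldType.

Lemma mpolyX_set (H : {set 'I_N}) :
  \prod_(v in H) 'X_v = 'X_[mnm_set H] :> {mpoly K[N]}.
Proof.
by rewrite (big_morph (fun a => 'X_[a] : {mpoly K[N]})
  (@mpolyXD _ _) (@mpolyX0 _ _)).
Qed.

Lemma mcoeffMXE (p : {mpoly K[N]}) (a b : 'X_{1..N}) :
  (p * 'X_[a])@_b = if (a <= b)%MM then p@_(b - a) else 0.
Proof.
case: ifP => ab; first by rewrite -{1}(submK ab) addmC mcoeffMX.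
rewrite {1}(mpolyE p) mulr_suml raddf_sum /= big1 // => c _.
rewrite -scalerAl -mpolyXD mcoeffZ mcoeffX.
case: eqP => [cab|]; last by rewrite mulr0.
by move: ab; rewrite -cab lem_addl.
Qed.

Lemma mderivX1 (i j : 'I_N) : ('X_j : {mpoly K[N]})^`M(i) = (j == i)%:R%:MP.
Proof.
rewrite mderivX mnm1E; case: eqP => [->|_]; last by rewrite scale0r.
by rewrite -{1}(add0m U_(i)%MM) addmK mpolyX0 scale1r.
Qed.

Lemma mcoeff0_mderivm (p : {mpoly K[N]}) (a : 'X_{1..N}) :
  (p^`M[a])@_0 = p@_a *+ \prod_(i < N) (a i)`!.
Proof.
rewrite mcoeff_mderivm addm0; congr (_ *+ _).
by apply: eq_bigr => i _; rewrite ffactnn.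
Qed.

Lemma mcoeff_sumZ (I : finType) (P : pred I) (a : I -> K)
  (p : I -> {mpoly K[N]}) (b : 'X_{1..N}) :
  (\sum_(i | P i) a i *: p i)@_b = \sum_(i | P i) a i * (p i)@_b.
Proof. by rewrite raddf_sum; apply: eq_bigr => i _; apply: mcoeffZ. Qed.

Lemma dhomog_eq0P k (p : {mpoly K[N]}) : p \is k.-homog ->
  p = 0 <-> forall f : {ffun 'I_k -> 'I_N}, p@_(mnm_ffun f) = 0.
Proof.
move=> p_homog; split=> [-> f | p_coef]; first by rewrite mcoeff0.
apply/mpolyP => b; rewrite mcoeff0; have [degb | degb] := eqVneq (mdeg b) k.
  by have [f <-] := mnm_ffun_surj degb; apply: p_coef.
exact: dhomog_nemf_coeff p_homog degb.
Qed.

End Monomials.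

Section TieredGraph.

Variables (K : fieldType) (n m : nat) (t : 'I_n -> 'I_m).

Lemma edge_lt (v : 'I_(nE t)) : ((edge v).1 < (edge v).2)%N.
Proof. by have := enum_valP v; rewrite /edge unfold_in /= => /andP []. Qed.

Lemma mderiv_zE (v : 'I_(nE t)) (i : 'I_n) : (zE K v)^`M(i) = (cfun K i v)%:MP.
Proof.
rewrite /zE /cfun mderivB !mderivX1.
have e12 : (edge v).1 != (edge v).2 by rewrite neq_ltn edge_lt.
case: eqP => [<-|_]; first by rewrite eq_sym (negbTE e12) subr0.
by case: eqP => _; rewrite -mpolyCB sub0r ?mulr1n ?mulr0n ?oppr0.
Qed.

Lemma mderiv_ZH (i : 'I_n) (H : {set 'I_(nE t)}) :
  (ZH K H)^`M(i) = \sum_(v in H) cfun K i v *: ZH K (H :\ v).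
Proof.
elim: {H}_.+1 {-2}H (ltnSn #|H|) => // N IHN H.
have [-> _ | [x Hx] HN] := set_0Vmem H.
  by rewrite /ZH !big_set0 -mpolyC1 mderivC.
rewrite /ZH (big_setD1 x Hx) /= mderivM mderiv_zE -/(ZH K (H :\ x)).
rewrite IHN; last by rewrite (cardsD1 x H) Hx in HN.
rewrite (big_setD1 x Hx) /= mul_mpolyC mulr_sumr; congr (_ + _).
apply: eq_bigr => v Hv; rewrite -scalerAr; congr (_ *: _).
have Hx' : x \in H :\ v by rewrite !inE eq_sym; case/setD1P: Hv => -> _.
by rewrite /ZH [in RHS](big_setD1 x Hx') /= setDDl setUC -setDDl.
Qed.

Lemma ZH_homog (H : {set 'I_(nE t)}) : ZH K H \is #|H|.-homog.
Proof.
have zE_homog v : zE K v \is 1.-homog.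
  by apply: dhomogD; rewrite ?dhomogN dhomogX; apply/eqP; apply: mdeg1.
rewrite /ZH -big_enum /= cardE.
elim: (enum H) => [|v r IHr]; first by rewrite big_nil dhomog1.
by rewrite big_cons /= -add1n; apply: dhomogM.
Qed.

Lemma slimS (H H' : {set 'I_(nE t)}) : H' \subset H -> slim H -> slim H'.
Proof.
move=> H'H /forallP slimH; apply/forallP => x; apply/forallP => y.
apply: connect_sub (forallP (slimH x) y) => a b /existsP [v /andP [vH ev]].
apply: connect1; apply/existsP; exists v; rewrite ev andbT.
by apply: contra vH; apply: (subsetP H'H).
Qed.

Lemma phiIdealD (p q : {mpoly K[nE t]}) :
  inPhiIdeal p -> inPhiIdeal q -> inPhiIdeal (p + q).
Proof.
move=> [a ->] [b ->]; exists (fun j => a j + b j).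
by rewrite -big_split /=; apply: eq_bigr => j _; rewrite mulrDl.
Qed.

Lemma phiIdealZ (c : K) (p : {mpoly K[nE t]}) :
  inPhiIdeal p -> inPhiIdeal (c *: p).
Proof.
move=> [a ->]; exists (fun j => c *: a j).
by rewrite scaler_sumr; apply: eq_bigr => j _; rewrite scalerAl.
Qed.

Lemma phiIdeal_mulr (r g : {mpoly K[nE t]}) :
  g \in phiGens K t -> inPhiIdeal (r * g).
Proof.
move=> g_gen; have g_lt : (index g (phiGens K t) < size (phiGens K t))%N.
  by rewrite index_mem.
exists (fun j => if j == Ordinal g_lt then r else 0).
rewrite (bigD1 (Ordinal g_lt)) //= eqxx nth_index // big1 ?addr0 //.
by move=> j /negbTE ->; rewrite mul0r.
Qed.

Lemma mcoeff_phiIdeal (p : {mpoly K[nE t]}) (H : {set 'I_(nE t)}) :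
  inPhiIdeal p -> slim H -> p@_(mnm_set H) = 0.
Proof.
move=> [a ->] slimH; rewrite raddf_sum; apply: big1 => /= j _.
have : (phiGens K t)`_j \in phiGens K t by apply: mem_nth.
rewrite mem_cat => /orP [] /mapP [x x_gen ->].
  rewrite mpolyXn mcoeffMXE ifF //; apply/negP => /mnm_lepP /(_ x).
  by rewrite mulmnE mnm1E eqxx mnm_setE; case: (x \in H).
rewrite /phiMono mpolyX_set mcoeffMXE ifF //; apply/negP => /mnm_lepP xH.
move: x_gen; rewrite mem_enum inE => /negP; apply; apply: slimS slimH.
by apply/subsetP => v vx; have := xH v; rewrite !mnm_setE vx; case: (v \in H).
Qed.

Lemma phiIdeal_mpolyX (a : 'X_{1..nE t}) :
  (forall H, slim H -> a != mnm_set H) -> inPhiIdeal ('X_[a] : {mpoly K[nE t]}).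
Proof.
move=> a_nonslim.
have [/existsP [v av] | /existsPn a_le1] := boolP [exists v, 1 < a v]%N.
  have Ua : (U_(v) *+ 2 <= a)%MM.
    by apply/mnm_lepP => x; rewrite mulmnE mnm1E; case: eqP => [<-|].
  rewrite -(submK Ua) mpolyXD -mpolyXn; apply: phiIdeal_mulr.
  by rewrite mem_cat; apply/orP; left; apply/mapP; exists v; rewrite ?mem_enum.
pose S := [set v | a v != 0%N].
have aS : a = mnm_set S.
  apply/mnmP => x; rewrite mnm_setE inE.
  by have := a_le1 x; case: (a x) => [|[]].
rewrite aS -mpolyX_set -[\prod_(v in S) _]mul1r; apply: phiIdeal_mulr.
rewrite mem_cat; apply/orP; right; apply/mapP; exists S => //.
by rewrite mem_enum inE; apply/negP => /a_nonslim; rewrite aS eqxx.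
Qed.

Lemma phiIdealE (p : {mpoly K[nE t]}) :
  inPhiIdeal p <-> forall H, slim H -> p@_(mnm_set H) = 0.
Proof.
split=> [p_in H | p_coef]; first exact: mcoeff_phiIdeal.
rewrite (mpolyE p) big_seq; apply: big_ind => [|q r|a a_supp].
- by exists (fun _ => 0); rewrite big1 // => j _; rewrite mul0r.
- exact: phiIdealD.
apply/phiIdealZ/phiIdeal_mpolyX => H slimH; apply: contraTneq a_supp => ->.
by rewrite mcoeff_msupp p_coef ?eqxx.
Qed.

Lemma mcoeff_prod_Xgen (s : seq 'I_n) (H : {set 'I_(nE t)}) :
  (\prod_(i <- s) Xgen K t i)@_(mnm_set H) =
  ((ZH K H)^`M[\sum_(i <- s) U_(i)])@_0.
Proof.
elim: s H => [|i s IHs] H.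
  rewrite !big_nil mderivm0m mcoeff1.
  have [->|[x xH]] := set_0Vmem H.
    by rewrite /mnm_set /ZH !big_set0 mcoeff1 !eqxx.
  rewrite (dhomog_nemf_coeff (ZH_homog H)); last first.
    move: (@mdeg0 n) => /= ->.
    by rewrite eq_sym -lt0n card_gt0; apply/set0Pn; exists x.
  by case: eqP => // /mnmP /(_ x); rewrite mnm_setE xH mnmE.
rewrite !big_cons mderivmDm mderivmU1m mderiv_ZH /Xgen mulr_suml !raddf_sum /=.
rewrite [RHS]big_mkcond /=; apply: eq_bigr => v _.
rewrite -scalerAl mcoeffZ [X in X@__]mulrC mcoeffMXE mnm1_le_set.
by case: ifP => vH; rewrite ?mulr0 // mnm_setD1 // mderivmZ mcoeffZ IHs.
Qed.

Definition prod_Xgen k (f : {ffun 'I_k -> 'I_n}) : {mpoly K[nE t]} :=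
  \prod_(j < k) Xgen K t (f j).

Lemma mcoeff_prod_Xgen_ZH k (f : {ffun 'I_k -> 'I_n}) (H : {set 'I_(nE t)}) :
  (prod_Xgen f)@_(mnm_set H) =
  (ZH K H)@_(mnm_ffun f) *+ \prod_(i < n) (mnm_ffun f i)`!.
Proof.
have := mcoeff_prod_Xgen [seq f j | j <- index_enum 'I_k] H.
by rewrite !big_map -mcoeff0_mderivm.
Qed.

Definition slim_coef (p : {mpoly K[nE t]}) (H : {set 'I_(nE t)}) : K :=
  if slim H then p@_(mnm_set H) else 0.

Definition ZH_slim k (H : {set 'I_(nE t)}) : {mpoly K[n]} :=
  if slim H && (#|H| == k) then ZH K H else 0.

Definition mcoeff_ffun k (p : {mpoly K[n]}) (f : {ffun 'I_k -> 'I_n}) : K :=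
  p@_(mnm_ffun f).

Lemma CGk_dim k :
  has_dim_mod (@CGk K n m t k) (@inPhiIdeal K n m t)
    (\rank (coef_mx (@prod_Xgen k) slim_coef)).
Proof.
apply: has_dim_mod_rank => [a | p [a ->] | a | a H]; first by exists a.
- by exists a.
- rewrite phiIdealE /slim_coef; split=> [p0 H | p0 H slimH].
    by case: ifP => // /p0.
  by have := p0 H; rewrite slimH.
rewrite /slim_coef; case: ifP => _; first exact: mcoeff_sumZ.
by rewrite big1 // => f _; rewrite mulr0.
Qed.

Lemma ZH_slim_homog k (H : {set 'I_(nE t)}) : ZH_slim k H \is k.-homog.
Proof.
rewrite /ZH_slim; case: ifP => [/andP [_ /eqP <-]|_]; last exact: dhomog0.
exact: ZH_homog.
Qed.

Lemma sum_ZH_slim_homog k (a : {set 'I_(nE t)} -> K) :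
  \sum_H a H *: ZH_slim k H \is k.-homog.
Proof. by apply: rpred_sum => H _; apply/dhomogZ/ZH_slim_homog. Qed.

Lemma SGk_dim k :
  has_dim_mod (@SGk K n m t k) (fun p : {mpoly K[n]} => p = 0)
    (\rank (coef_mx (ZH_slim k) (@mcoeff_ffun k))).
Proof.
apply: has_dim_mod_rank => [a | p [[c pE] p_homog] | a | a f].
- split; last exact: sum_ZH_slim_homog.
  exists (fun H : {set 'I_(nE t)} => if #|H| == k then a H else 0).
  rewrite [LHS](bigID (@slim _ _ t)) /= [X in _ + X]big1 ?addr0; last first.
    by move=> H /negbTE nH; rewrite /ZH_slim nH scaler0.
  apply: eq_bigr => H slimH; rewrite /ZH_slim slimH.
  by case: eqP; rewrite ?scaler0 ?scale0r.
- exists c; apply/mpolyP => b; rewrite mcoeff_sumZ.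
  have [degb | degb] := eqVneq (mdeg b) k; last first.
    rewrite (dhomog_nemf_coeff p_homog degb) big1 // => H _.
    by rewrite (dhomog_nemf_coeff (ZH_slim_homog k H) degb) mulr0.
  rewrite pE mcoeff_sumZ [RHS](bigID (@slim _ _ t)) /=.
  rewrite [X in _ = _ + X]big1 ?addr0 => [|H /negbTE nH]; last first.
    by rewrite /ZH_slim nH mcoeff0 mulr0.
  apply: eq_bigr => H slimH; rewrite /ZH_slim slimH /=.
  case: eqP => // cardH; rewrite mcoeff0 (dhomog_nemf_coeff (ZH_homog H)) //.
  by apply/eqP => bH; apply: cardH; rewrite -bH; exact: degb.
- exact/dhomog_eq0P/sum_ZH_slim_homog.
- exact: mcoeff_sumZ.
Qed.

Lemma rank_prod_Xgen_ZH_slim (hK : [pchar K] =i pred0) k :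
  \rank (coef_mx (@prod_Xgen k) slim_coef) =
  \rank (coef_mx (ZH_slim k) (@mcoeff_ffun k)).
Proof.
pose D : 'rV[K]_#|{ffun 'I_k -> 'I_n}| :=
  \row_j (\prod_(i < n) (mnm_ffun (enum_val j) i)`!)%:R.
have D_free : row_free (diag_mx D).
  rewrite row_free_unit unitmxE det_diag unitfE prodf_seq_neq0.
  apply/allP => j _; rewrite mxE; move/pcharf0P: hK => ->.
  by rewrite -lt0n prodn_gt0 // => i; apply: fact_gt0.
suff -> : (coef_mx (@prod_Xgen k) slim_coef) =
          (coef_mx (ZH_slim k) (@mcoeff_ffun k) *m diag_mx D)^T.
  by rewrite mxrank_tr mxrankMfree.
apply/matrixP => j H; rewrite [RHS]mxE mul_mx_diag !mxE /slim_coef /ZH_slim.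
case: ifP => slimH /=; last by rewrite /mcoeff_ffun mcoeff0 mul0r.
rewrite mcoeff_prod_Xgen_ZH mulr_natr /mcoeff_ffun.
case: eqP => // cardH; rewrite mcoeff0 (dhomog_nemf_coeff (ZH_homog _)) //.
by apply/eqP => fH; apply: cardH; rewrite -fH; exact: mdeg_mnm_ffun.
Qed.

End TieredGraph.

Theorem mainTheorem4 (K : fieldType) (hK : [pchar K] =i pred0)
  (n m : nat) (t : 'I_n -> 'I_m) (t_surj : forall j : 'I_m, exists i, t i = j)
  (k : nat) :
  exists d : nat,
    has_dim_mod (@CGk K n m t k) (@inPhiIdeal K n m t) d /\
    has_dim_mod (@SGk K n m t k) (fun p : {mpoly K[n]} => p = 0) d.
Proof.
exists (\rank (coef_mx (@prod_Xgen K n m t k) (@slim_coef K n m t))).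
split; first exact: CGk_dim.
by rewrite rank_prod_Xgen_ZH_slim //; apply: SGk_dim.
Qed.
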